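(* Let $\hat\Phi\colon\mathcal{X}\to\mathbb{R}^{N_2}$ be a ReLU network with one hidden layer of $N_1$ neurons, $\hat\Phi(x)=\sum_{i=1}^{N_1}\hat w_{2,i}\phi(\langle\hat w_{1,i},x\rangle-\hat b_{1,i})-\hat b_{2,i}$ with nonzero $\hat w_{1,i}$, whose biases are of the form $\hat b_{1,i}=\langle\hat w_{1,i},x_i\rangle$ with $x_i\in\mathcal{X}$ for $i=1,\dots,N_1$. Then for any $\epsilon>0$ there exists a unit sampled network $\Phi$ with one hidden layer such that $\sup_{x\in\mathcal{X}}\|\Phi(x)-\hat\Phi(x)\|<\epsilon$.
   Context: Fix $D\ge1$, Euclidean norm and inner product on $\mathbb{R}^D$, $\phi(t)=\max\{t,0\}$. For $A\subseteq\mathbb{R}^D$ let $d(z,A)=\inf_{a\in A}\|z-a\|$, $\mathrm{Med}(A)=\{z:\exists p\neq q\in A,\ \|p-z\|=\|q-z\|=d(z,A)\}$, reach $\tau_A=\inf_{a\in A}d(a,\mathrm{Med}(A))$. Let $\mathcal{X}'\subset\mathbb{R}^D$ be nonempty compact with $\tau_{\mathcal{X}'}>0$, fix $0<\epsilon_I<\min\{\tau_{\mathcal{X}'},1\}$, and $\mathcal{X}=\{x:d(x,\mathcal{X}')\le\epsilon_I\}$. A unit sampled network with one hidden layer is $\Phi(x)=\sum_i w_{2,i}\phi(\langle w_{1,i},x\rangle-b_{1,i})-b_{2,i}$ where for each hidden neuron there are distinct $x^{(1)}_{0,i},x^{(2)}_{0,i}\in\mathcal{X}$ with $w_{1,i}=\frac{x^{(2)}_{0,i}-x^{(1)}_{0,i}}{\|x^{(2)}_{0,i}-x^{(1)}_{0,i}\|}$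 and $b_{1,i}=\langle w_{1,i},x^{(1)}_{0,i}\rangle$; the output parameters $w_{2,i},b_{2,i}$ are unrestricted. *)

From HB Require Import structures.
From mathcomp Require Import all_boot all_order all_algebra.
From mathcomp Require Import all_classical all_reals all_analysis.
Set Implicit Arguments. Unset Strict Implicit. Unset Printing Implicit Defensive.
Import Order.TTheory GRing.Theory Num.Theory.
Import numFieldNormedType.Exports.
Local Open Scope classical_set_scope.
Local Open Scope ring_scope.

Section Defs.
Variable R : realType.

Definition dotp (n : nat) (u v : 'rV[R]_n) : R := \sum_(i < n) u 0 i * v 0 i.
Definition enorm (n : nat) (v : 'rV[R]_n) : R := Num.sqrt (dotp v v).

Definition relu (t : R) : R := Num.max t 0.

(* d(z, A) = inf_{a in A} ||z - a||, in the extended reals (inf of empty = +oo) *)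
Definition edist (n : nat) (z : 'rV[R]_n) (A : set 'rV[R]_n) : \bar R :=
  ereal_inf [set (enorm (z - a))%:E | a in A].

Definition medial (n : nat) (A : set 'rV[R]_n) : set 'rV[R]_n :=
  [set z | exists p q, [/\ A p, A q, p <> q,
     (enorm (p - z))%:E = edist z A & (enorm (q - z))%:E = edist z A]].

Definition reach (n : nat) (A : set 'rV[R]_n) : \bar R :=
  ereal_inf [set edist a (medial A) | a in A].

Definition thicken (n : nat) (A : set 'rV[R]_n) (eps : R) : set 'rV[R]_n :=
  [set x | (edist x A <= eps%:E)%E].

Definition net1 (D N M : nat) (w1 : 'I_N -> 'rV[R]_D) (b1 : 'I_N -> R)
  (w2 b2 : 'I_N -> 'rV[R]_M) (x : 'rV[R]_D) : 'rV[R]_M :=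
  \sum_(i < N) (relu (dotp (w1 i) x - b1 i) *: w2 i - b2 i).

Definition unit_sampled_net1 (D M : nat) (X : set 'rV[R]_D)
  (Phi : 'rV[R]_D -> 'rV[R]_M) : Prop :=
  exists (N : nat) (x1 x2 : 'I_N -> 'rV[R]_D) (w2 b2 : 'I_N -> 'rV[R]_M),
    (forall i, [/\ X (x1 i), X (x2 i) & x1 i <> x2 i]) /\
    let w1 := fun i => (enorm (x2 i - x1 i))^-1 *: (x2 i - x1 i) in
    let b1 := fun i => dotp (w1 i) (x1 i) in
    forall x, Phi x = net1 w1 b1 w2 b2 x.

End Defs.

From HB Require Import structures.
From mathcomp Require Import all_boot all_order all_algebra.
From mathcomp Require Import all_classical all_reals all_analysis.
From mathcomp Require Import lra.
Set Implicit Arguments. Unset Strict Implicit. Unset Printing Implicit Defensive.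
Import Order.TTheory GRing.Theory Num.Theory.
Import numFieldNormedType.Exports.
Local Open Scope classical_set_scope.
Local Open Scope ring_scope.

(* Write each hidden weight as w = |w| u with |u| = 1.  By positive homogeneity
   of the ReLU the neuron relu(<w,x> - <w,x_i>) equals |w| relu(<u,x> - <u,x_i>),
   so it suffices to find x1 <> x2 in X with (x2 - x1)/|x2 - x1| = u and <u,x1>
   within delta of <u,x_i>.  As x_i is at distance < epsI + eta from some a in
   X', such points lie on the segment a + t u, |t| <= epsI, which is contained
   in X.  The ReLU being 1-Lipschitz, moving each bias by at most delta moves
   the output by at most delta * sum_i |w_i| |w2_i|. *)

Section Euclidean.
Variables (R : realType) (n : nat).
Implicit Types (u v w : 'rV[R]_n) (k : R).

Definition normalize v : 'rV[R]_n := (enorm v)^-1 *: v.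

Lemma dotpC u v : dotp u v = dotp v u.
Proof. by apply: eq_bigr => i _; rewrite mulrC. Qed.

Lemma dotpDr u v w : dotp u (v + w) = dotp u v + dotp u w.
Proof. by rewrite /dotp -big_split; apply: eq_bigr => i _; rewrite !mxE mulrDr. Qed.

Lemma dotpZr k u v : dotp u (k *: v) = k * dotp u v.
Proof. by rewrite /dotp mulr_sumr; apply: eq_bigr => i _; rewrite !mxE mulrCA. Qed.

Lemma dotpBr u v w : dotp u (v - w) = dotp u v - dotp u w.
Proof. by rewrite dotpDr -scaleN1r dotpZr mulN1r. Qed.

Lemma dotpDl u v w : dotp (u + v) w = dotp u w + dotp v w.
Proof. by rewrite dotpC dotpDr !(dotpC w). Qed.

Lemma dotpZl k u v : dotp (k *: u) v = k * dotp u v.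
Proof. by rewrite dotpC dotpZr dotpC. Qed.

Lemma dotpBl u v w : dotp (u - v) w = dotp u w - dotp v w.
Proof. by rewrite dotpC dotpBr !(dotpC w). Qed.

Lemma dotp0l v : dotp 0 v = 0.
Proof. by rewrite -(scale0r 0) dotpZl mul0r. Qed.

Lemma dotp_ge0 u : 0 <= dotp u u.
Proof. by apply: sumr_ge0 => i _; rewrite -expr2 sqr_ge0. Qed.

Lemma dotp_eq0 u : (dotp u u == 0) = (u == 0).
Proof.
apply/idP/idP => [/eqP uu0|/eqP->]; last by rewrite dotp0l.
apply/eqP/rowP => j; rewrite mxE; apply/eqP.
have : u 0 j * u 0 j = 0.
  by apply: (psumr_eq0P _ uu0) => // i _; rewrite -expr2 sqr_ge0.
by move/eqP; rewrite mulf_eq0 orbb.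
Qed.

Lemma enorm_ge0 u : 0 <= enorm u.
Proof. exact: sqrtr_ge0. Qed.

Lemma enorm0 : enorm (0 : 'rV[R]_n) = 0.
Proof. by rewrite /enorm dotp0l sqrtr0. Qed.

Lemma sqr_enorm u : enorm u ^+ 2 = dotp u u.
Proof. by rewrite sqr_sqrtr // dotp_ge0. Qed.

Lemma enormZ k u : enorm (k *: u) = `|k| * enorm u.
Proof. by rewrite /enorm dotpZl dotpZr mulrA -expr2 sqrtrM ?sqr_ge0 // sqrtr_sqr. Qed.

Lemma enorm_gt0 u : (0 < enorm u) = (u != 0).
Proof.
by rewrite lt_neqAle enorm_ge0 andbT eq_sym -sqrf_eq0 sqr_enorm dotp_eq0.
Qed.

Lemma dotp_le_enorm u v : `|dotp u v| <= enorm u * enorm v.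
Proof.
have [->|u0] := eqVneq u 0; first by rewrite dotp0l enorm0 normr0 mul0r.
have uu_gt0 : 0 < dotp u u by rewrite -sqr_enorm exprn_gt0 ?enorm_gt0.
set a := dotp u u; set b := dotp v v; set t := dotp u v.
have : 0 <= dotp (a *: v - t *: u) (a *: v - t *: u) by apply: dotp_ge0.
rewrite !(dotpBl, dotpBr, dotpZl, dotpZr) (dotpC v u) -/a -/b -/t.
rewrite [t * a]mulrC subrr mulr0 subr0 pmulr_rge0 // subr_ge0 -expr2 => tab.
by rewrite -sqrtr_sqr -sqrtrM ?dotp_ge0 // ler_wsqrtr.
Qed.

Lemma enormD u v : enorm (u + v) <= enorm u + enorm v.
Proof.
rewrite -(@ler_pXn2r _ 2) ?nnegrE ?addr_ge0 ?enorm_ge0 //.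
rewrite sqrrD !sqr_enorm dotpDl !dotpDr (dotpC v u).
have := dotp_le_enorm u v; have := real_ler_norm (num_real (dotp u v)); lra.
Qed.

Lemma enorm_sum_le (I : Type) (r : seq I) (P : pred I) (F : I -> 'rV[R]_n) :
  enorm (\sum_(i <- r | P i) F i) <= \sum_(i <- r | P i) enorm (F i).
Proof.
apply: (big_ind2 (fun v t => enorm v <= t)) => //; first by rewrite enorm0.
by move=> v1 t1 v2 t2 h1 h2; apply: le_trans (enormD _ _) (lerD h1 h2).
Qed.

Lemma enorm_normalize v : v != 0 -> enorm (normalize v) = 1.
Proof.
by move=> v0; rewrite enormZ ger0_norm ?invr_ge0 ?enorm_ge0 // mulVf // gt_eqF ?enorm_gt0.
Qed.

Lemma normalizeZ k v : 0 < k -> normalize (k *: v) = normalize v.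
Proof.
move=> k0; rewrite /normalize enormZ gtr0_norm // invfM scalerA.
by rewrite mulrAC mulVf ?mul1r // gt_eqF.
Qed.

Lemma normalize_id u : enorm u = 1 -> normalize u = u.
Proof. by move=> u1; rewrite /normalize u1 invr1 scale1r. Qed.

End Euclidean.

Lemma interval_pair_near (R : realFieldType) (rho eta c : R) :
  0 < eta -> eta <= rho -> `|c| < rho + eta ->
  exists c1 c2, [/\ `|c1| <= rho, `|c2| <= rho, c1 < c2 & `|c1 - c| <= 2 * eta].
Proof.
move=> eta0 eta_rho; rewrite ltr_norml => /andP[c_lo c_hi].
have [c_rho|c_rho] := leP c (rho - eta); last first.
  by exists (rho - eta), rho; rewrite !ler_norml; split; try apply/andP; try split; lra.
have [rho_c|rho_c] := leP (- rho) c.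
  by exists c, (c + eta); rewrite !ler_norml; split; try apply/andP; try split; lra.
by exists (- rho), (- rho + eta); rewrite !ler_norml; split; try apply/andP; try split; lra.
Qed.

Section Thickening.
Variables (R : realType) (n : nat) (A : set 'rV[R]_n) (r : R).

Lemma thicken_ball a x : A a -> enorm (x - a) <= r -> thicken A r x.
Proof.
move=> Aa xa; apply: le_trans (_ : (enorm (x - a))%:E <= _)%E; last by rewrite lee_fin.
by apply: ereal_inf_lbound; exists a.
Qed.

Lemma thicken_near x eta : thicken A r x -> 0 < eta ->
  exists2 a, A a & enorm (x - a) < r + eta.
Proof.
move=> xA eta0; have r_lt : (r%:E < (r + eta)%:E)%E by rewrite lte_fin ltrDl.
have /ereal_inf_lt[_ [a Aa <-]] := le_lt_trans xA r_lt.
by rewrite lte_fin; exists a.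
Qed.

Lemma thicken_sample_pair x u delta : 0 < r -> 0 < delta -> enorm u = 1 ->
  thicken A r x ->
  exists x1 x2, [/\ thicken A r x1, thicken A r x2, x1 <> x2,
    normalize (x2 - x1) = u & `|dotp u x1 - dotp u x| <= delta].
Proof.
move=> r0 delta0 u1 xA.
pose eta := Num.min (delta / 2) r.
have eta0 : 0 < eta by rewrite lt_min r0 divr_gt0.
have eta_r : eta <= r by rewrite ge_min lexx orbT.
have eta_delta : 2 * eta <= delta.
  have : eta <= delta / 2 by rewrite ge_min lexx.
  lra.
have [a Aa xa] := thicken_near xA eta0.
pose c := dotp u (x - a).
have c_lt : `|c| < r + eta by apply: le_lt_trans (dotp_le_enorm _ _) _; rewrite u1 mul1r.
have [c1 [c2 [c1r c2r c12 c1c]]] := interval_pair_near eta0 eta_r c_lt.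
have on_segment k : `|k| <= r -> thicken A r (a + k *: u).
  by move=> kr; apply: (thicken_ball Aa); rewrite addrC addKr enormZ u1 mulr1.
have x21 : a + c2 *: u - (a + c1 *: u) = (c2 - c1) *: u.
  by rewrite opprD addrACA subrr add0r scalerBl.
have u0 : u != 0 by rewrite -enorm_gt0 u1.
exists (a + c1 *: u), (a + c2 *: u); split; try exact: on_segment.
- move=> /esym/eqP; rewrite -subr_eq0 x21 scaler_eq0 subr_eq0 (negbTE u0) orbF.
  by rewrite gt_eqF.
- by rewrite x21 normalizeZ ?subr_gt0 // normalize_id.
- have uu : dotp u u = 1 by rewrite -sqr_enorm u1 expr1n.
  rewrite dotpDr dotpZr uu mulr1 (_ : _ - _ = c1 - c) ?(le_trans c1c) //.
  by rewrite /c dotpBr; lra.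
Qed.

End Thickening.

Section Network.
Variable R : realType.

Lemma relu_lipschitz (a b : R) : `|relu a - relu b| <= `|a - b|.
Proof.
have := ler_norm (a - b); have := ler_norm (b - a); rewrite distrC.
rewrite /relu ler_norml; have [a0|a0] := leP a 0; have [b0|b0] := leP b 0;
  rewrite ?(max_r a0) ?(max_r b0) ?(max_l (ltW a0)) ?(max_l (ltW b0)) => *;
  apply/andP; split; lra.
Qed.

Lemma reluZ (k a : R) : 0 <= k -> relu (k * a) = k * relu a.
Proof. by move=> k0; rewrite /relu -[X in Num.max _ X](mulr0 k) maxr_pMr. Qed.

Variables (D M N : nat).

Lemma net1_rescale (c b1 : 'I_N -> R) (w1 : 'I_N -> 'rV[R]_D)
    (w2 b2 : 'I_N -> 'rV[R]_M) : (forall i, 0 < c i) ->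
  net1 w1 b1 w2 b2 =1 net1 (fun i => (c i)^-1 *: w1 i) (fun i => (c i)^-1 * b1 i)
                           (fun i => c i *: w2 i) b2.
Proof.
move=> c_gt0 x; apply: eq_bigr => i _; congr (_ - _).
rewrite dotpZl -mulrBr reluZ ?invr_ge0 ?ltW // scalerA mulrAC mulVf ?mul1r //.
by rewrite gt_eqF.
Qed.

Lemma enorm_net1_bias_le (w1 : 'I_N -> 'rV[R]_D) (b1 b1' : 'I_N -> R)
    (w2 b2 : 'I_N -> 'rV[R]_M) (x : 'rV[R]_D) :
  enorm (net1 w1 b1 w2 b2 x - net1 w1 b1' w2 b2 x)
    <= \sum_i `|b1 i - b1' i| * enorm (w2 i).
Proof.
rewrite /net1 -sumrB; apply: le_trans (enorm_sum_le _ _ _) (ler_sum _ _) => i _.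
rewrite opprB addrA subrK -scalerBl enormZ ler_wpM2r ?enorm_ge0 //.
apply: le_trans (relu_lipschitz _ _) _.
by rewrite (addrC (dotp _ _)) addrKA opprK addrC distrC.
Qed.

End Network.

Section Sampling.
Variables (R : realType) (D M N : nat) (A : set 'rV[R]_D) (r : R).

Lemma unit_sampled_net1_near (u xs : 'I_N -> 'rV[R]_D) (w2 b2 : 'I_N -> 'rV[R]_M)
    (delta : R) :
  0 < r -> 0 < delta -> (forall i, enorm (u i) = 1) ->
  (forall i, thicken A r (xs i)) ->
  exists2 Phi, unit_sampled_net1 (thicken A r) Phi &
    forall x, enorm (Phi x - net1 u (fun i => dotp (u i) (xs i)) w2 b2 x)
                <= delta * \sum_i enorm (w2 i).
Proof.
move=> r0 delta0 u1 xsA.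
have /choice[p hp] i : exists p : 'rV[R]_D * 'rV[R]_D,
    [/\ thicken A r p.1, thicken A r p.2, p.1 <> p.2,
      normalize (p.2 - p.1) = u i & `|dotp (u i) p.1 - dotp (u i) (xs i)| <= delta].
  have [x1 [x2 ?]] := thicken_sample_pair r0 delta0 (u1 i) (xsA i).
  by exists (x1, x2).
pose x1 i := (p i).1; pose x2 i := (p i).2.
have w1E : (fun i => normalize (x2 i - x1 i)) = u by apply/funext => i; have [] := hp i.
exists (net1 u (fun i => dotp (u i) (x1 i)) w2 b2).
  exists N, x1, x2, w2, b2; split; first by move=> i; have [] := hp i.
  by move=> /= x; rewrite -w1E.
move=> x; apply: le_trans (enorm_net1_bias_le _ _ _ _ _ _) _.
rewrite mulr_sumr; apply: ler_sum => i _.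
apply: ler_wpM2r; first exact: enorm_ge0.
by have [] := hp i.
Qed.

End Sampling.

Theorem lemma3 (R : realType) (D N2 : nat) (hD : (0 < D)%N)
  (X' : set 'rV[R]_D) (hne : X' !=set0) (hcpt : compact X')
  (hreach : (0%:E < reach X')%E)
  (epsI : R) (hepsI0 : 0 < epsI) (hepsI1 : epsI < 1)
  (hepsIr : (epsI%:E < reach X')%E)
  (N1 : nat) (w1h : 'I_N1 -> 'rV[R]_D) (b1h : 'I_N1 -> R)
  (w2h b2h : 'I_N1 -> 'rV[R]_N2) (xs : 'I_N1 -> 'rV[R]_D)
  (hw1 : forall i, w1h i != 0)
  (hxs : forall i, thicken X' epsI (xs i))
  (hb1 : forall i, b1h i = dotp (w1h i) (xs i))
  (eps : R) (heps : 0 < eps) :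
  exists Phi : 'rV[R]_D -> 'rV[R]_N2,
    unit_sampled_net1 (thicken X' epsI) Phi /\
    (ereal_sup [set (enorm (Phi x - net1 w1h b1h w2h b2h x))%:E
                 | x in thicken X' epsI] < eps%:E)%E.
Proof.
pose nw i := enorm (w1h i).
have nw_gt0 i : 0 < nw i by rewrite enorm_gt0.
pose u i := normalize (w1h i).
have u1 i : enorm (u i) = 1 by apply: enorm_normalize.
pose w2 i := nw i *: w2h i.
pose S := \sum_i enorm (w2 i).
have S_ge0 : 0 <= S by apply: sumr_ge0 => i _; apply: enorm_ge0.
pose delta := eps / (S + 1).
have delta_gt0 : 0 < delta by rewrite divr_gt0 ?ltr_wpDl.
have deltaS : delta * S < eps.
  by rewrite mulrAC ltr_pdivrMr ?ltr_wpDl // ltr_pM2l // ltrDl.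
have net_hatE : net1 w1h b1h w2h b2h =1 net1 u (fun i => dotp (u i) (xs i)) w2 b2h.
  move=> x; rewrite (net1_rescale _ _ _ _ nw_gt0); congr net1.
  by apply/funext => i; rewrite hb1 dotpZl.
have [Phi Phi_sampled Phi_near] :=
  unit_sampled_net1_near w2 b2h hepsI0 delta_gt0 u1 hxs.
exists Phi; split => //.
apply: (@le_lt_trans _ _ (delta * S)%:E); last by rewrite lte_fin.
by apply: ge_ereal_sup => _ [x _ <-]; rewrite lee_fin net_hatE.
Qed.
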